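(* Let $\mathcal{D}$ be a domain and $c\ge1$. Let $\sigma$ be distributed according to $\mathsf{Spin}_{\mathcal{D},c}^{++}$ and let $\xi$ be the FK--Ising representation constructed from $\sigma$. Then: (i) the joint law of $(\sigma,\xi)$ is proportional to $(c-1)^{|\xi|-|\omega(\sigma^\bullet)|}\mathbf 1_{\sigma^\circ\perp\xi}\mathbf 1_{\sigma^\bullet\perp\xi}$; (ii) the law $\mathsf{FKIs}_{\mathcal{D}^\circ,c}$ of $\xi$ satisfies \[\mathsf{FKIs}_{\mathcal{D}^\circ,c}(\xi)=\frac{1}{2Z}(c-1)^{|\xi|}2^{k(\xi^1)}\sum_{\sigma^\bullet\colon\omega(\sigma^\bullet)\subset\xi}\Big(\frac{1}{c-1}\Big)^{|\omega(\sigma^\bullet)|}\] for a normalizing constant $Z$ not depending on $\xi$, where the sum is over spin configurations $\sigma^\bullet$ on the vertices of $\mathcal{D}^\bullet$ equal to $+1$ at corners; (iii) if $\xi$ is sampled from $\mathsf{FKIs}_{\mathcal{D}^\circ,c}$ and one assigns $+1$ to all boundary clusters of $\xi$ and, independently, $+1$ or $-1$ with probability $1/2$ each to every other cluster of $\xi$, the resulting spin configuration has the law of the marginal of $\mathsf{Spin}_{\mathcal{D},c}^{++}$ on $\sigma^\circ$.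
   Context: Weights $a=b=1$, $c\ge1$. Faces of $\mathbb{Z}^2$ are centered at integer points; the face $(i,j)$ is even if $i+j$ is even, odd otherwise. A domain $\mathcal{D}$ is a finite subgraph of $\mathbb{Z}^2$ consisting of a simple cycle $\partial\mathcal{D}$ with everything it encloses. An ice-rule spin configuration is $\sigma\colon F(\mathbb{Z}^2)\to\{\pm1\}$ such that around every vertex at least one diagonal pair of faces has equal spins; a vertex is of type $c$ if both diagonal pairs agree. $\mathsf{Spin}_{\mathcal{D},c}^{++}$ is the measure on ice-rule configurations equal to $+1$ on all faces outside $\mathcal{D}$, proportional to $c^{N_c}$, $N_c$ the number of type-$c$ vertices of $\mathcal{D}$. A corner of $\mathcal{D}$ is a pair $(u,z)$ with $u$ a face outside $\mathcal{D}$ sharing an edge with a face of $\mathcal{D}$ and $z$ a vertex of $\partial\mathcal{D}$ on $u$, even/odd according to $u$. $\mathcal{D}^\bullet$ is the graph on even faces of $\mathcal{D}$ and even corners with edges between even faces of $\mathcal{D}$ sharing a vertex, between a corner $(u,z)$ and an even face $v\ni z$ of $\mathcal{D}$, and between corners $(u,z),(v,z)$; corners $(u,z),(u,z')$ are identified when $zz'$ is an edge of $\mathcal{D}$. $\mathcal{D}^\circ$ is defined likewise with odd faces and corners. Edges of both are in bijection with vertices of $\mathcal{D}$ and $e\in E(\mathcal{D}^\circ)$, $e^*\in E(\mathcal{D}^\bullet)$ denote dual edges. Spins are extended to corners by $\sigma(u,z)=\sigma(u)$; $\sigma^\bullet,\sigma^\circ$ are the restrictions to vertices of $\mathcal{D}^\bullet$,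 $\mathcal{D}^\circ$. $\theta(\sigma^\circ)\subset E(\mathcal{D}^\circ)$ is the set of edges whose endpoints have different $\sigma^\circ$ spins; $\omega(\sigma^\bullet)\subset E(\mathcal{D}^\circ)$ is the set of edges $e$ whose dual $e^*$ has endpoints with different $\sigma^\bullet$ spins. Given $\sigma$, the FK--Ising representation $\xi\in\{0,1\}^{E(\mathcal{D}^\circ)}$ (identified with its set of open edges) is: $\xi(e)=0$ if $e\in\theta(\sigma^\circ)$, $\xi(e)=1$ if $e\in\omega(\sigma^\bullet)$, and otherwise independently $\xi(e)=1$ with probability $(c-1)/c$. $\xi^*\in\{0,1\}^{E(\mathcal{D}^\bullet)}$ is $\xi^*(e^* )=1-\xi(e)$. $\sigma^\circ\perp\xi$ means $\sigma^\circ$ is constant on every cluster of $\xi$; $\sigma^\bullet\perp\xi$ means $\sigma^\bullet$ is constant on every cluster of $\xi^*$. Boundary clusters of $\xi$ are those containing a corner; $\xi^1$ is $\xi$ with all corner vertices merged into one vertex, and $k(\xi^1)$ is its number of clusters. *)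

From HB Require Import structures.
From mathcomp Require Import all_boot all_order all_algebra.
Set Implicit Arguments. Unset Strict Implicit. Unset Printing Implicit Defensive.
Import Order.TTheory GRing.Theory Num.Theory.

Local Open Scope ring_scope.

(** * Geometry of Z^2.
   A face of Z^2 is identified with its center (i,j) : int * int.
   A vertex of Z^2 is encoded by (a,b) : int * int, standing for the point
   (a + 1/2, b + 1/2). *)
Definition pt := (int * int)%type.

Definition fpar (f : pt) : bool := odd (absz (f.1 + f.2)).

Definition face_vertices (f : pt) : seq pt :=
  [:: (f.1 - 1, f.2 - 1); (f.1, f.2 - 1); (f.1 - 1, f.2); f].

Definition faces_around (z : pt) : seq pt :=
  [:: z; (z.1 + 1, z.2); (z.1, z.2 + 1); (z.1 + 1, z.2 + 1)].

Definition vadj : rel pt := fun z z' =>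
  (absz (z.1 - z'.1) + absz (z.2 - z'.2) == 1)%N.

Definition simple_cycle (p : seq pt) : bool :=
  [&& (3 <= size p)%N, uniq p & cycle vadj p].

(** the edge e of Z^2 crosses the horizontal half-line going from the
    center of face f to the right *)
Definition crosses (f : pt) (e : pt * pt) : bool :=
  let: (z, z') := e in
  [&& z.1 == z'.1, f.1 <= z.1 &
      ((z.2 == f.2 - 1) && (z'.2 == f.2)) || ((z.2 == f.2) && (z'.2 == f.2 - 1))].

(** face f is enclosed by the cycle p (ray-crossing parity) *)
Definition enclosed (p : seq pt) (f : pt) : bool :=
  odd (count (crosses f) (zip p (rot 1 p))).

Definition is_domain (D : seq pt) : Prop :=
  exists p : seq pt, simple_cycle p /\ forall f : pt, (f \in D) = enclosed p f.

Section Domain.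
Variable D : seq pt.

Definition vtxs : seq pt := undup (flatten (map face_vertices D)).
(** vertices of D = edges of D° (and of D•) *)
Definition VtxT := seq_sub vtxs.
Definition FaceT := seq_sub D.

Definition edgeD (z z' : pt) : bool :=
  vadj z z' && has (fun u => (u \in D) && (u \in faces_around z')) (faces_around z).

(** vertices of D° / D• : (f, None) is the face f of D,
    (u, Some z) is the corner (u, z). *)
Definition node := (pt * option pt)%type.

Definition is_corner (x : node) : bool := x.2 != None.

(** par = true : D° (odd faces and corners); par = false : D• (even). *)
Definition nodes (par : bool) : seq node :=
  [seq (f, None) | f <- D & fpar f == par] ++
  flatten [seq [seq (u, Some z) | u <- faces_around z & (u \notin D) && (fpar u == par)]
          | z <- vtxs].

Definition NodeT (par : bool) := seq_sub (nodes par).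

Definition dnode (z f : pt) : node := if f \in D then (f, None) else (f, Some z).

(** endpoints of the edge of D° (par = true) or D• (par = false)
    associated with the vertex z of D *)
Definition ends (par : bool) (z : pt) : node * node :=
  let: (a, b) := z in
  if fpar (a, b) == par then (dnode z (a, b), dnode z (a + 1, b + 1))
  else (dnode z (a + 1, b), dnode z (a, b + 1)).

(** identification of corners (u,z) ~ (u,z') when zz' is an edge of D *)
Definition glue (x y : node) : bool :=
  match x, y with
  | (u, Some z), (u', Some z') => (u == u') && edgeD z z'
  | _, _ => false
  end.

Definition gadj (par : bool) (op : pred VtxT) : rel (NodeT par) := fun x y =>
  [exists z : VtxT, op z &&
     (let e := ends par (val z) in
      ((e.1 == val x) && (e.2 == val y)) || ((e.1 == val y) && (e.2 == val x)))]
  || glue (val x) (val y).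

Definition clusters (T : finType) (e : rel T) : {set {set T}} :=
  [set [set y | connect e x y] | x : T].

(** spin configurations on faces of D; true = +1, false = -1 *)
Definition spin (sigma : {ffun FaceT -> bool}) (u : pt) : bool :=
  match (insub u : option FaceT) with Some f => sigma f | None => true end.

(** ice rule, checked at the vertices of D (at any other vertex of Z^2 all
    four faces lie outside D and carry spin +1, so it holds trivially) *)
Definition ice (sigma : {ffun FaceT -> bool}) : bool :=
  [forall z : VtxT, let: (a, b) := val z in
     (spin sigma (a, b) == spin sigma (a + 1, b + 1))
     || (spin sigma (a + 1, b) == spin sigma (a, b + 1))].

Definition typec (sigma : {ffun FaceT -> bool}) (z : pt) : bool :=
  let: (a, b) := z in
  (spin sigma (a, b) == spin sigma (a + 1, b + 1))
  && (spin sigma (a + 1, b) == spin sigma (a, b + 1)).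

Definition Nc (sigma : {ffun FaceT -> bool}) : nat :=
  #|[set z : VtxT | typec sigma (val z)]|.

(** sigma° and sigma• (spins extended to corners by sigma(u,z) = sigma(u)) *)
Definition sig_of (par : bool) (sigma : {ffun FaceT -> bool}) : {ffun NodeT par -> bool} :=
  [ffun x => spin sigma (val x).1].

Definition nval (par : bool) (s : {ffun NodeT par -> bool}) (x : node) : bool :=
  match (insub x : option (NodeT par)) with Some y => s y | None => true end.

(** theta(sigma°) and omega(sigma•), as sets of edges of D° (indexed by VtxT) *)
Definition theta (s : {ffun NodeT true -> bool}) (z : VtxT) : bool :=
  let e := ends true (val z) in nval s e.1 != nval s e.2.
Definition omega (s : {ffun NodeT false -> bool}) (z : VtxT) : bool :=
  let e := ends false (val z) in nval s e.1 != nval s e.2.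

(** FK configurations xi : set of open edges of D° *)
Definition nopen (xi : {ffun VtxT -> bool}) : nat := #|[set z | xi z]|.
Definition nomega (s : {ffun NodeT false -> bool}) : nat := #|[set z | omega s z]|.

Definition adjo (xi : {ffun VtxT -> bool}) : rel (NodeT true) := @gadj true (fun z => xi z).
Definition adjb (xi : {ffun VtxT -> bool}) : rel (NodeT false) :=
  @gadj false (fun z => ~~ xi z).

Definition perpo (s : {ffun NodeT true -> bool}) (xi : {ffun VtxT -> bool}) : bool :=
  [forall x, forall y, connect (adjo xi) x y ==> (s x == s y)].
Definition perpb (s : {ffun NodeT false -> bool}) (xi : {ffun VtxT -> bool}) : bool :=
  [forall x, forall y, connect (adjb xi) x y ==> (s x == s y)].

(** xi^1 : all corner vertices merged into one; k(xi^1) *)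
Definition adj1 (xi : {ffun VtxT -> bool}) : rel (NodeT true) := fun x y =>
  adjo xi x y || (is_corner (val x) && is_corner (val y)).
Definition k1 (xi : {ffun VtxT -> bool}) : nat := #|clusters (adj1 xi)|.

Definition nbclusters (xi : {ffun VtxT -> bool}) : nat :=
  #|[set C in clusters (adjo xi) | [forall y in C, ~~ is_corner (val y)]]|.

Definition bplus (tau : {ffun NodeT true -> bool}) (xi : {ffun VtxT -> bool}) : bool :=
  [forall x, forall y, (connect (adjo xi) x y && is_corner (val y)) ==> tau x].

Variable R : realFieldType.
Variable c : R.

Definition ind (b : bool) : R := if b then 1 else 0.

Definition SpinZ : R := \sum_(sigma : {ffun FaceT -> bool} | ice sigma) c ^+ Nc sigma.

Definition SpinP (sigma : {ffun FaceT -> bool}) : R :=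
  if ice sigma then c ^+ Nc sigma / SpinZ else 0.

(** conditional law of xi(e) given sigma *)
Definition fkfac (sigma : {ffun FaceT -> bool}) (xi : {ffun VtxT -> bool}) (z : VtxT) : R :=
  if theta (sig_of true sigma) z then (if xi z then 0 else 1)
  else if omega (sig_of false sigma) z then (if xi z then 1 else 0)
  else (if xi z then (c - 1) / c else c^-1).

Definition Joint (sigma : {ffun FaceT -> bool}) (xi : {ffun VtxT -> bool}) : R :=
  SpinP sigma * \prod_(z : VtxT) fkfac sigma xi z.

Definition FKIs (xi : {ffun VtxT -> bool}) : R :=
  \sum_(sigma : {ffun FaceT -> bool}) Joint sigma xi.

(** probability that the cluster-wise random assignment described in (iii)
    produces the configuration tau, given xi *)
Definition assignP (xi : {ffun VtxT -> bool}) (tau : {ffun NodeT true -> bool}) : R :=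
  if perpo tau xi && bplus tau xi then (2^-1) ^+ nbclusters xi else 0.

End Domain.

(* Split the face spins into sigma° (odd faces) and sigma• (even faces);
   sigma |-> (sigma°, sigma•) is a bijection onto pairs of configurations that
   are +1 at the corners.  At a vertex z of D the FK edge z is forced closed by
   theta(sigma°) and forced open by omega(sigma•); the ice rule says that this
   never happens simultaneously, and z is of type c exactly when neither
   happens.  So the product of the FK factors vanishes unless sigma° ⊥ xi and
   sigma• ⊥ xi, and then equals c^-N_c (c-1)^(|xi| - |omega(sigma•)|), whose
   c^-N_c cancels the spin weight: this is (i).  Summing (i) over sigma°
   factorizes, and the sigma°-sum counts the 2^(#non-boundary clusters) spin
   assignments that are constant on the clusters of xi and +1 on the boundary
   ones.  Since k(xi^1) is that number of clusters plus one (when corners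
   exist), this gives (ii); dividing the joint law by the law of xi gives the
   uniform independent cluster assignment of (iii). *)

From HB Require Import structures.
From mathcomp Require Import all_boot all_order all_algebra.
From mathcomp Require Import ring.
Set Implicit Arguments. Unset Strict Implicit. Unset Printing Implicit Defensive.
Import Order.TTheory GRing.Theory Num.Theory.
Local Open Scope ring_scope.

Section Clusters.
Variables (T : finType) (e : rel T).

Lemma connect_constantE (s : T -> bool) :
  [forall x, forall y, connect e x y ==> (s x == s y)] =
  [forall x, forall y, e x y ==> (s x == s y)].
Proof.
apply/idP/idP => /forallP H; apply/forallP => x; apply/forallP => y; apply/implyP.
  by move=> exy; apply: (implyP (forallP (H x) y)); apply: connect1.
have s_closed : closed e s by move=> x' y' /(implyP (forallP (H x') y')) /eqP.
by move=> /(closed_connect s_closed) sxy; apply/eqP.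
Qed.

Variable b : pred T.
Hypothesis e_sym : symmetric e.
Let e_csym : connect_sym e := sym_connect_sym e_sym.
Local Notation root := (fingraph.root e).
Local Notation rootP := (fingraph.rootP e_csym).

Definition free_clusters : {set {set T}} :=
  [set C in clusters e | [forall y in C, ~~ b y]].

Definition cluster_spins : {set {ffun T -> bool}} :=
  [set s : {ffun T -> bool} | [forall x, b x ==> s x]
                            && [forall x, forall y, connect e x y ==> (s x == s y)]].

Definition free_roots : {set T} :=
  [set r | (root r == r) && [forall x, (root x == r) ==> ~~ b x]].

Lemma constant_rootE (s : T -> bool) :
  [forall x, forall y, connect e x y ==> (s x == s y)] = [forall x, s x == s (root x)].
Proof.
apply/forallP/forallP => H x.
  exact: implyP (forallP (H x) _) (connect_root e x).
apply/forallP => y; apply/implyP => /rootP xy.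
by rewrite (eqP (H x)) (eqP (H y)) xy.
Qed.

Lemma cluster_spins_root s x : s \in cluster_spins ->
  s x = if root x \in free_roots then s (root x) else true.
Proof.
rewrite inE constant_rootE => /andP [/forallP s_b /forallP s_root].
rewrite (eqP (s_root x)); case: ifP => // /negbT.
rewrite inE root_root // eqxx /= negb_forall => /existsP [y].
rewrite negb_imply negbK => /andP [/eqP <- b_y].
by rewrite -(eqP (s_root y)) (implyP (s_b y)).
Qed.

(* A cluster spin configuration is determined by its values at the roots of
   the free clusters, which are arbitrary. *)
Lemma card_cluster_spins_roots : #|cluster_spins| = (2 ^ #|free_roots|)%N.
Proof.
pose restr (s : {ffun T -> bool}) := [ffun x => if x \in free_roots then s x else true].
have restr_inj : {in cluster_spins &, injective restr}.
  move=> s1 s2 s1P s2P eq12; apply/ffunP => x.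
  rewrite (cluster_spins_root x s1P) (cluster_spins_root x s2P).
  by have := congr1 (fun g : {ffun T -> bool} => g (root x)) eq12; rewrite !ffunE.
rewrite -(card_in_imset restr_inj) -[2%N]card_bool -(card_pffun_on true free_roots predT).
apply: eq_card => g; apply/imsetP/pffun_onP.
  case=> s _ ->; split=> // ; apply/subsetP => x.
  by rewrite unfold_in /= ffunE; case: ifP.
case=> g_supp _; exists [ffun x => g (root x)].
  rewrite inE constant_rootE; apply/andP; split; apply/forallP => x; rewrite ?ffunE.
    apply/implyP => b_x; apply/negPn/negP => g_x.
    have : root x \in free_roots by apply: (subsetP g_supp); rewrite unfold_in /= (negbTE g_x).
    by rewrite inE => /andP [_ /forallP /(_ x)]; rewrite eqxx b_x.
  by rewrite root_root.
apply/ffunP => x; rewrite !ffunE; case: ifP => x_free.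
  by move: x_free; rewrite inE => /andP [/eqP -> _].
apply/negPn/negP => g_x.
by move: (subsetP g_supp x); rewrite unfold_in /= x_free (negbTE g_x) => /(_ isT).
Qed.

Lemma card_free_roots : #|free_roots| = #|free_clusters|.
Proof.
pose cl (x : T) := [set y | connect e x y].
have cl_inj : {in free_roots &, injective cl}.
  move=> r1 r2; rewrite !inE => /andP [/eqP r1_root _] /andP [/eqP r2_root _] eq12.
  have : r2 \in cl r1 by rewrite eq12 inE connect0.
  by rewrite inE => /rootP; rewrite r1_root r2_root.
rewrite -(card_in_imset cl_inj); apply: eq_card => C; apply/imsetP/idP.
  case=> r; rewrite inE => /andP [/eqP r_root /forallP r_free] ->.
  rewrite inE; apply/andP; split; first by apply/imsetP; exists r.
  apply/forallP => y; apply/implyP; rewrite inE => /rootP ry.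
  by apply: (implyP (r_free y)); rewrite -ry r_root.
rewrite inE => /andP [/imsetP [x _ ->] /forallP C_free]; exists (root x).
  rewrite inE root_root // eqxx /=; apply/forallP => y; apply/implyP => /eqP yx.
  by apply: (implyP (C_free y)); rewrite inE; apply/rootP.
by apply/setP => y; rewrite !inE; apply/idP/idP => /rootP h; apply/rootP;
  rewrite ?root_root in h *.
Qed.

Lemma card_cluster_spins : #|cluster_spins| = (2 ^ #|free_clusters|)%N.
Proof. by rewrite card_cluster_spins_roots card_free_roots. Qed.

Definition merge_rel : rel T := fun x y => e x y || b x && b y.

Lemma merge_csym : connect_sym merge_rel.
Proof. by apply: sym_connect_sym => x y; rewrite /merge_rel e_sym andbC. Qed.

Definition merge_cluster x := [set y | connect merge_rel x y].

Lemma merge_cluster_free x : (forall y, connect e x y -> ~~ b y) ->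
  merge_cluster x = [set y | connect e x y].
Proof.
move=> x_free; apply/setP => y; rewrite !inE; apply/idP/idP; last first.
  by apply: connect_sub => u v uv; apply: connect1; rewrite /merge_rel uv.
case/connectP => p + ->.
suff: forall u, connect e x u -> path merge_rel u p -> connect e x (last u p) by apply.
elim: p => [|z p IHp] u xu //= /andP [/orP [uz | /andP [b_u _]]].
  exact/IHp/(connect_trans xu)/connect1.
by move: (x_free u xu); rewrite b_u.
Qed.

Lemma merge_cluster_boundary x y x0 : connect e x y -> b y -> b x0 ->
  merge_cluster x = merge_cluster x0.
Proof.
move=> xy b_y b_x0; have x_x0 : connect merge_rel x x0.
  apply: (connect_trans _ (connect1 (_ : merge_rel y x0))).
    by apply: connect_sub xy => u v uv; apply: connect1; rewrite /merge_rel uv.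
  by rewrite /merge_rel b_y b_x0 orbT.
by apply/setP => z; rewrite !inE; apply/idP/idP; apply: connect_trans; rewrite // merge_csym.
Qed.

Lemma clusters_merge_split :
  clusters merge_rel = free_clusters :|: [set merge_cluster x | x in b].
Proof.
apply/setP => C; rewrite in_setU; apply/imsetP/orP.
  case=> x _ ->; case: (boolP [exists y, connect e x y && b y]).
    case/existsP => y /andP [xy b_y]; right; apply/imsetP; exists y => //.
    exact: (merge_cluster_boundary xy b_y b_y).
  rewrite negb_exists => /forallP x_free.
  have x_free' y : connect e x y -> ~~ b y by move=> xy; move: (x_free y); rewrite xy.
  left; rewrite -/(merge_cluster x) merge_cluster_free // inE; apply/andP; split.
    by apply/imsetP; exists x.
  by apply/forallP => y; apply/implyP; rewrite inE; apply: x_free'.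
case=> [|/imsetP [x _ ->]]; last by exists x.
rewrite inE => /andP [/imsetP [x _ ->] /forallP C_free]; exists x => //.
rewrite -/(merge_cluster x) merge_cluster_free // => y xy.
by apply: (implyP (C_free y)); rewrite inE.
Qed.

Lemma card_clusters_merge :
  #|clusters merge_rel| = ([exists x, b x] + #|free_clusters|)%N.
Proof.
have disjoint_boundary : free_clusters :&: [set merge_cluster x | x in b] = set0.
  apply/setP => C; rewrite !inE; apply/negbTE/negP.
  case/andP => /andP [_ /forallP C_free] /imsetP [x b_x C_def].
  have x_in_C : x \in C by rewrite C_def inE connect0.
  by case/negP: (implyP (C_free x) x_in_C).
have card_boundary : #|[set merge_cluster x | x in b]| = [exists x, b x].
  case: (boolP [exists x, b x]) => [/existsP [x0 b_x0] | /negP no_b].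
    suff -> : [set merge_cluster x | x in b] = [set merge_cluster x0] by rewrite cards1.
    apply/setP => C; rewrite inE; apply/imsetP/eqP => [[x b_x ->]|->]; last by exists x0.
    exact: merge_cluster_boundary (connect0 e x) b_x b_x0.
  apply/eqP; rewrite cards_eq0; apply/eqP/setP => C; rewrite inE.
  by apply/imsetP => -[x b_x _]; apply: no_b; apply/existsP; exists x.
by rewrite clusters_merge_split cardsU disjoint_boundary cards0 subn0 card_boundary addnC.
Qed.

End Clusters.

Lemma odd_absz_add1 (x : int) : odd (absz (x + 1)) = ~~ odd (absz x).
Proof.
case: x => n; first by rewrite /= addn1.
rewrite NegzE.
have -> : - (n.+1%:Z) + 1 = - (n%:Z) by rewrite -addn1 PoszD opprD addrK.
by rewrite !abszN /= negbK.
Qed.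

Lemma fpar_shiftx (a b : int) : fpar (a + 1, b) = ~~ fpar (a, b).
Proof. by rewrite /fpar /= addrAC odd_absz_add1. Qed.

Lemma fpar_shifty (a b : int) : fpar (a, b + 1) = ~~ fpar (a, b).
Proof. by rewrite /fpar /= addrA odd_absz_add1. Qed.

Lemma fpar_shiftxy (a b : int) : fpar (a + 1, b + 1) = fpar (a, b).
Proof. by rewrite fpar_shifty fpar_shiftx negbK. Qed.

Section DomainGraphs.
Variable D : seq pt.

Lemma spin_val (s : {ffun FaceT D -> bool}) (f : FaceT D) : spin s (val f) = s f.
Proof. by rewrite /spin valK. Qed.

Lemma spin_out (s : {ffun FaceT D -> bool}) u : u \notin D -> spin s u = true.
Proof. by move=> u_out; rewrite /spin insubN. Qed.

Lemma nodes_fpar_face par (x : node) : x \in nodes D par ->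
  fpar x.1 = par /\ (x.1 \in D) = (x.2 == None).
Proof.
rewrite mem_cat => /orP [/mapP [f] | /flatten_mapP [z _ /mapP [u]]].
  by rewrite mem_filter => /andP [/eqP f_par f_in] -> /=.
by rewrite mem_filter => /andP [/andP [u_out /eqP u_par] _] -> /=; rewrite (negbTE u_out).
Qed.

Lemma dnode_fst z f : (dnode D z f).1 = f.
Proof. by rewrite /dnode; case: ifP. Qed.

Lemma dnode_nodes par z f : z \in vtxs D -> f \in faces_around z -> fpar f = par ->
  dnode D z f \in nodes D par.
Proof.
move=> z_vtx f_around f_par; rewrite /dnode /nodes mem_cat; case: ifP => f_in.
  by apply/orP; left; apply/mapP; exists f => //; rewrite mem_filter f_in f_par eqxx.
apply/orP; right; apply/flatten_mapP; exists z => //.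
by apply/mapP; exists f => //; rewrite mem_filter f_around f_in f_par eqxx.
Qed.

Lemma ends_nodes par (z : VtxT D) :
  ((ends D par (val z)).1 \in nodes D par) && ((ends D par (val z)).2 \in nodes D par).
Proof.
move: (valP z); case: (val z) => a b z_vtx /=.
case: ifP => /eqP ab_par /=.
  by rewrite !dnode_nodes // ?fpar_shiftxy // /faces_around !inE eqxx ?orbT.
rewrite !dnode_nodes // /faces_around ?inE ?eqxx ?orbT //.
  by rewrite fpar_shifty; case: par ab_par; case: fpar.
by rewrite fpar_shiftx; case: par ab_par; case: fpar.
Qed.

Lemma nval_val par (s : {ffun NodeT D par -> bool}) (y : NodeT D par) : nval s (val y) = s y.
Proof. by rewrite /nval valK. Qed.

Lemma nval_sig_of par (s : {ffun FaceT D -> bool}) x : x \in nodes D par ->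
  nval (sig_of par s) x = spin s x.1.
Proof. by move=> x_node; rewrite /nval; case: insubP => [y _ <-|]; rewrite ?ffunE ?x_node. Qed.

Definition diag_mismatch (s : {ffun FaceT D -> bool}) (z : pt) : bool :=
  spin s z != spin s (z.1 + 1, z.2 + 1).

Definition antidiag_mismatch (s : {ffun FaceT D -> bool}) (z : pt) : bool :=
  spin s (z.1 + 1, z.2) != spin s (z.1, z.2 + 1).

Lemma theta_sig_of (s : {ffun FaceT D -> bool}) (z : VtxT D) : theta (sig_of true s) z =
  if fpar (val z) then diag_mismatch s (val z) else antidiag_mismatch s (val z).
Proof.
rewrite /theta; case/andP: (ends_nodes true z) => e1 e2; rewrite !nval_sig_of //.
rewrite /diag_mismatch /antidiag_mismatch.
by case: (val z) => a b /=; case: fpar; rewrite /= !dnode_fst.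
Qed.

Lemma omega_sig_of (s : {ffun FaceT D -> bool}) (z : VtxT D) : omega (sig_of false s) z =
  if fpar (val z) then antidiag_mismatch s (val z) else diag_mismatch s (val z).
Proof.
rewrite /omega; case/andP: (ends_nodes false z) => e1 e2; rewrite !nval_sig_of //.
rewrite /diag_mismatch /antidiag_mismatch.
by case: (val z) => a b /=; case: fpar; rewrite /= !dnode_fst.
Qed.

Lemma ice_theta_omega (s : {ffun FaceT D -> bool}) :
  ice s = [forall z, ~~ (theta (sig_of true s) z && omega (sig_of false s) z)].
Proof.
apply: eq_forallb => z; rewrite theta_sig_of omega_sig_of /diag_mismatch /antidiag_mismatch.
by case: (val z) => a b /=; case: fpar; rewrite negb_and !negbK // orbC.
Qed.

Lemma typec_theta_omega (s : {ffun FaceT D -> bool}) (z : VtxT D) :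
  typec s (val z) = ~~ theta (sig_of true s) z && ~~ omega (sig_of false s) z.
Proof.
rewrite theta_sig_of omega_sig_of /diag_mismatch /antidiag_mismatch.
by case: (val z) => a b /=; case: fpar; rewrite !negbK // andbC.
Qed.

Lemma edgeD_sym z z' : edgeD D z z' = edgeD D z' z.
Proof.
rewrite /edgeD; congr andb.
  by rewrite /vadj -abszN opprB -(abszN (z.2 - _)) opprB.
by apply/hasP/hasP => -[u u1 /andP [u_in u2]]; exists u; rewrite ?u_in.
Qed.

Lemma glue_sym x y : glue D x y = glue D y x.
Proof. by case: x => u [z|]; case: y => u' [z'|] //=; rewrite eq_sym edgeD_sym. Qed.

Lemma gadj_sym (par : bool) (op : pred (VtxT D)) : symmetric (@gadj D par op).
Proof.
move=> x y; rewrite /gadj glue_sym; congr orb.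
by apply: eq_existsb => z; rewrite orbC.
Qed.

Lemma gadj_constantE (par : bool) (op : pred (VtxT D)) (s : {ffun NodeT D par -> bool}) :
  (forall x y : NodeT D par, glue D (val x) (val y) -> s x = s y) ->
  [forall x, forall y, connect (gadj op) x y ==> (s x == s y)] =
  [forall z, op z ==> (nval s (ends D par (val z)).1 == nval s (ends D par (val z)).2)].
Proof.
move=> s_glue; rewrite connect_constantE; apply/forallP/forallP => H.
  move=> z; apply/implyP => op_z; case/andP: (ends_nodes par z) => e1 e2.
  pose x : NodeT D par := SeqSub e1; pose y : NodeT D par := SeqSub e2.
  rewrite -[(ends D par _).1]/(val x) -[(ends D par _).2]/(val y) !nval_val.
  apply: (implyP (forallP (H x) y)); apply/orP; left; apply/existsP; exists z.
  by rewrite op_z /= !eqxx.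
move=> x; apply/forallP => y; apply/implyP.
case/orP => [/existsP [z /andP [op_z ends_z]] | /s_glue -> //].
move: (implyP (H z) op_z).
by case/orP: ends_z => /andP [/eqP -> /eqP ->]; rewrite !nval_val // eq_sym.
Qed.

Lemma perpo_thetaE (s : {ffun NodeT D true -> bool}) (xi : {ffun VtxT D -> bool}) :
  (forall x y : NodeT D true, glue D (val x) (val y) -> s x = s y) ->
  perpo s xi = [forall z, xi z ==> ~~ theta s z].
Proof.
move=> s_glue; rewrite /perpo /adjo gadj_constantE //.
by apply: eq_forallb => z; rewrite /theta negbK.
Qed.

Lemma perpb_omegaE (s : {ffun NodeT D false -> bool}) (xi : {ffun VtxT D -> bool}) :
  (forall x y : NodeT D false, glue D (val x) (val y) -> s x = s y) ->
  perpb s xi = [forall z, omega s z ==> xi z].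
Proof.
move=> s_glue; rewrite /perpb /adjb gadj_constantE //.
by apply: eq_forallb => z; rewrite /omega; case: (xi z); case: (_ == _).
Qed.

Lemma sig_of_glue par (sg : {ffun FaceT D -> bool}) (x y : NodeT D par) :
  glue D (val x) (val y) -> sig_of par sg x = sig_of par sg y.
Proof.
rewrite !ffunE; case: (val x) => u [z|] //; case: (val y) => u' [z'|] //=.
by case/andP => /eqP ->.
Qed.

Definition corner_plus par (s : {ffun NodeT D par -> bool}) : bool :=
  [forall x, is_corner (val x) ==> s x].

Lemma corner_plus_glue par (s : {ffun NodeT D par -> bool}) (x y : NodeT D par) :
  corner_plus s -> glue D (val x) (val y) -> s x = s y.
Proof.
move=> /forallP s_plus; move: (implyP (s_plus x)) (implyP (s_plus y)); rewrite /is_corner.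
by case: (val x) => u [z|] //; case: (val y) => u' [z'|] //= -> // ->.
Qed.

Lemma face_node (f : FaceT D) : (val f, None) \in nodes D (fpar (val f)).
Proof.
rewrite /nodes mem_cat; apply/orP; left; apply/mapP; exists (val f) => //.
by rewrite mem_filter eqxx (valP f).
Qed.

Lemma nval_sig_of_face par (sg : {ffun FaceT D -> bool}) (f : FaceT D) :
  fpar (val f) = par -> nval (sig_of par sg) (val f, None) = sg f.
Proof. by move=> f_par; rewrite nval_sig_of -?f_par ?face_node //= spin_val. Qed.

Lemma sig_of_corner_plus par (sg : {ffun FaceT D -> bool}) : corner_plus (sig_of par sg).
Proof.
apply/forallP => x; apply/implyP; rewrite ffunE.
have [_] := nodes_fpar_face (valP x); rewrite /is_corner.
by case: (val x) => u [z|] //= u_out _; rewrite spin_out ?u_out.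
Qed.

Lemma sig_of_eq par (s : {ffun NodeT D par -> bool}) (sg : {ffun FaceT D -> bool}) :
  corner_plus s -> (forall f : FaceT D, fpar (val f) = par -> sg f = nval s (val f, None)) ->
  sig_of par sg = s.
Proof.
move=> /forallP s_plus sg_s; apply/ffunP => x; rewrite ffunE.
have [x_par x_face] := nodes_fpar_face (valP x).
move: (implyP (s_plus x)) x_par x_face (nval_val s x); rewrite /is_corner.
case: (val x) => u [z|] /= s_x u_par u_face s_u; first by rewrite spin_out ?u_face // s_x.
have u_in : u \in D by rewrite u_face.
by rewrite -[u]/(val (SeqSub u_in : FaceT D)) spin_val sg_s // s_u.
Qed.

Lemma sig_of_inj (s1 s2 : {ffun FaceT D -> bool}) :
  sig_of true s1 = sig_of true s2 -> sig_of false s1 = sig_of false s2 -> s1 = s2.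
Proof.
move=> eq_odd eq_even; apply/ffunP => f; case f_par: (fpar (val f)).
  by rewrite -(nval_sig_of_face s1 f_par) -(nval_sig_of_face s2 f_par) eq_odd.
by rewrite -(nval_sig_of_face s1 f_par) -(nval_sig_of_face s2 f_par) eq_even.
Qed.

Definition face_spins (a : {ffun NodeT D true -> bool}) (b : {ffun NodeT D false -> bool}) :
  {ffun FaceT D -> bool} :=
  [ffun f => if fpar (val f) then nval a (val f, None) else nval b (val f, None)].

Lemma sig_of_face_spins a b : corner_plus a -> corner_plus b ->
  sig_of true (face_spins a b) = a /\ sig_of false (face_spins a b) = b.
Proof.
by move=> a_plus b_plus; split; apply: sig_of_eq => // f f_par; rewrite ffunE f_par.
Qed.

Lemma sum_sig_of_split (R : pzSemiRingType)
    (H : {ffun NodeT D true -> bool} -> R) (G : {ffun NodeT D false -> bool} -> R) :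
  \sum_(sg : {ffun FaceT D -> bool}) H (sig_of true sg) * G (sig_of false sg)
  = (\sum_(s | corner_plus s) H s) * (\sum_(s | corner_plus s) G s).
Proof.
rewrite big_distrlr /= pair_big_dep /=.
pose phi (sg : {ffun FaceT D -> bool}) := (sig_of true sg, sig_of false sg).
have phi_inj : {in [set: {ffun FaceT D -> bool}] &, injective phi}.
  by move=> s1 s2 _ _ [eq_odd eq_even]; apply: sig_of_inj.
rewrite (eq_bigl (mem (phi @: [set: {ffun FaceT D -> bool}]))); last first.
  case=> a b /=; apply/andP/imsetP => [[a_plus b_plus] | [sg _ [-> ->]]].
    exists (face_spins a b); rewrite ?inE //.
    by case: (sig_of_face_spins a_plus b_plus) => odd_eq even_eq; rewrite /phi odd_eq even_eq.
  by rewrite !sig_of_corner_plus.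
by rewrite big_imset //=; apply: eq_bigl => sg; rewrite inE.
Qed.

Lemma card_corner_plus_perpo (xi : {ffun VtxT D -> bool}) :
  #|[pred s : {ffun NodeT D true -> bool} | corner_plus s && perpo s xi]| = (2 ^ nbclusters xi)%N.
Proof.
rewrite -(card_cluster_spins (fun x => is_corner (val x)) (gadj_sym (par := true) (fun z => xi z))).
by apply: eq_card => s; rewrite !inE.
Qed.

Lemma k1E (xi : {ffun VtxT D -> bool}) :
  k1 xi = ([exists x : NodeT D true, is_corner (val x)] + nbclusters xi)%N.
Proof.
exact: (card_clusters_merge (fun x => is_corner (val x)) (gadj_sym (par := true) (fun z => xi z))).
Qed.

Lemma bplus_corner_plus (tau : {ffun NodeT D true -> bool})
    (xi : {ffun VtxT D -> bool}) :
  perpo tau xi -> bplus tau xi = corner_plus tau.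
Proof.
move=> /forallP tau_perp; apply/forallP/forallP => tau_plus x.
  by apply/implyP => x_corner; apply: (implyP (forallP (tau_plus x) x)); rewrite connect0.
apply/forallP => y; apply/implyP => /andP [xy y_corner].
by rewrite (eqP (implyP (forallP (tau_perp x) y) xy)) (implyP (tau_plus y)).
Qed.

End DomainGraphs.

Lemma prod_ind (R : realFieldType) (I : finType) (P : pred I) :
  \prod_i ind R (P i) = ind R [forall i, P i].
Proof.
case: (boolP [forall i, P i]) => [/forallP all_P | /forallPn [i not_P]].
  by apply: big1 => i _; rewrite /ind all_P.
by rewrite (bigD1 i) //= /ind (negbTE not_P) mul0r.
Qed.

Section Weights.
Variables (D : seq pt) (R : realFieldType) (c : R).
Hypothesis c_ge1 : 1 <= c.

Let c_gt0 : 0 < c. Proof. exact: lt_le_trans ltr01 c_ge1. Qed.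
Let c_neq0 : c != 0. Proof. by rewrite gt_eqF. Qed.

Lemma SpinZ_gt0 : 0 < SpinZ D c.
Proof.
pose plus : {ffun FaceT D -> bool} := [ffun => true].
have plus_ice : ice plus.
  have plus_spin u : spin plus u = true by rewrite /spin; case: insub => [?|]; rewrite ?ffunE.
  by apply/forallP => z; case: (val z) => a b; rewrite !plus_spin.
rewrite /SpinZ (bigD1 plus) //= ltr_pwDl ?exprn_gt0 //.
by apply: sumr_ge0 => s _; rewrite exprn_ge0 // ltW.
Qed.

Lemma sum_fkfac (sg : {ffun FaceT D -> bool}) :
  \sum_(xi : {ffun VtxT D -> bool}) \prod_z fkfac c sg xi z = 1.
Proof.
pose F (z : VtxT D) (b : bool) : R :=
  if theta (sig_of true sg) z then (if b then 0 else 1)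
  else if omega (sig_of false sg) z then (if b then 1 else 0)
  else (if b then (c - 1) / c else c^-1).
rewrite (eq_bigr (fun xi : {ffun VtxT D -> bool} => \prod_z F z (xi z))) // -bigA_distr_bigA /=.
apply: big1 => z _; rewrite big_bool /F /=.
case: ifP => _; first by rewrite add0r.
case: ifP => _; first by rewrite addr0.
by rewrite -[X in _ + X = _]mul1r -mulrDl subrK divff.
Qed.

Lemma sum_Joint (sg : {ffun FaceT D -> bool}) :
  \sum_(xi : {ffun VtxT D -> bool}) Joint c sg xi = SpinP c sg.
Proof. by rewrite /Joint -mulr_sumr sum_fkfac mulr1. Qed.

Lemma fkfacE (sg : {ffun FaceT D -> bool}) (xi : {ffun VtxT D -> bool}) z :
  ~~ (theta (sig_of true sg) z && omega (sig_of false sg) z) ->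
  fkfac c sg xi z =
    ind R (xi z ==> ~~ theta (sig_of true sg) z) * ind R (omega (sig_of false sg) z ==> xi z)
    * (if typec sg (val z) then c^-1 else 1) * (if typec sg (val z) && xi z then c - 1 else 1).
Proof.
rewrite /fkfac typec_theta_omega /ind.
case: (theta _ z); case: (omega _ z); case: (xi z) => //= _;
  by rewrite ?mulr1 ?mul1r ?mul0r ?mulr0 // mulrC.
Qed.

Lemma card_typec_open (sg : {ffun FaceT D -> bool}) (xi : {ffun VtxT D -> bool}) :
  perpo (sig_of true sg) xi -> perpb (sig_of false sg) xi ->
  #|[set z | typec sg (val z) && xi z]| = (nopen xi - nomega (sig_of false sg))%N.
Proof.
rewrite perpo_thetaE ?perpb_omegaE; try exact: sig_of_glue.
move=> /forallP open_theta /forallP omega_open.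
have -> : [set z | typec sg (val z) && xi z] =
          [set z | xi z] :\: [set z | omega (sig_of false sg) z].
  apply/setP => z; rewrite !inE typec_theta_omega.
  by move: (open_theta z) (omega_open z); case: (theta _ z); case: (omega _ z); case: (xi z).
rewrite cardsD (setIidPr _) //; apply/subsetP => z; rewrite !inE.
exact: (implyP (omega_open z)).
Qed.

Lemma prod_fkfac (sg : {ffun FaceT D -> bool}) (xi : {ffun VtxT D -> bool}) :
  ice sg ->
  \prod_z fkfac c sg xi z =
    ind R (perpo (sig_of true sg) xi) * ind R (perpb (sig_of false sg) xi)
    * (c^-1 ^+ Nc sg * (c - 1) ^+ (nopen xi - nomega (sig_of false sg))).
Proof.
rewrite ice_theta_omega => /forallP sg_ice.
rewrite (eq_bigr _ (fun z _ => fkfacE xi (sg_ice z))) !big_split /= !prod_ind.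
rewrite -perpo_thetaE -?perpb_omegaE; try exact: sig_of_glue.
rewrite -!big_mkcond !prodr_const -mulrA.
case: (boolP (perpo _ xi)) => [perp_o|]; last by rewrite /ind !mul0r.
case: (boolP (perpb _ xi)) => [perp_b|]; last by rewrite /ind mulr0 !mul0r.
rewrite /Nc -(card_typec_open perp_o perp_b).
by congr (_ * (_ ^+ _ * _ ^+ _)); apply: eq_card => z; rewrite inE.
Qed.

Lemma perp_ice (sg : {ffun FaceT D -> bool}) (xi : {ffun VtxT D -> bool}) :
  perpo (sig_of true sg) xi -> perpb (sig_of false sg) xi -> ice sg.
Proof.
rewrite perpo_thetaE ?perpb_omegaE ?ice_theta_omega; try exact: sig_of_glue.
move=> /forallP open_theta /forallP omega_open; apply/forallP => z.
by move: (open_theta z) (omega_open z); case: (theta _ z); case: (omega _ z); case: (xi z).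
Qed.

Definition perpb_weight (xi : {ffun VtxT D -> bool}) (s : {ffun NodeT D false -> bool}) : R :=
  (c - 1) ^+ (nopen xi - nomega s) * ind R (perpb s xi).

Lemma Joint_perpE (sg : {ffun FaceT D -> bool}) (xi : {ffun VtxT D -> bool}) :
  Joint c sg xi =
  (SpinZ D c)^-1 * (ind R (perpo (sig_of true sg) xi) * perpb_weight xi (sig_of false sg)).
Proof.
rewrite /Joint /SpinP /perpb_weight; case: ifP => [sg_ice | /negbT sg_not_ice].
  have SpinZ_neq0 : SpinZ D c != 0 by rewrite gt_eqF ?SpinZ_gt0.
  have cN_neq0 : c ^+ Nc sg != 0 by rewrite expf_neq0.
  rewrite prod_fkfac // exprVn.
  (* Generalize first: [field] would otherwise try to reduce the finite
     cardinalities and boolean tests inside the powers and indicators. *)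
  move: (c ^+ _) cN_neq0 (SpinZ D c) SpinZ_neq0 (ind R _) (ind R _) ((c - 1) ^+ _).
  by move=> a a_neq0 Z Z_neq0 io ib w; field; rewrite a_neq0 Z_neq0.
rewrite mul0r; case: (boolP (perpo _ xi)) => perp_o; case: (boolP (perpb _ xi)) => perp_b;
  rewrite /ind ?(mulr0, mul0r) //.
by case/negP: sg_not_ice; apply: perp_ice perp_o perp_b.
Qed.

Lemma sum_perpo_corner_plus (xi : {ffun VtxT D -> bool}) :
  \sum_(s | corner_plus s) ind R (perpo s xi) = 2 ^+ nbclusters xi.
Proof. by rewrite /ind -big_mkcondr sumr_const card_corner_plus_perpo natrX. Qed.

Lemma FKIs_factor (xi : {ffun VtxT D -> bool}) : FKIs c xi =
  (SpinZ D c)^-1 * (2 ^+ nbclusters xi * \sum_(s | corner_plus s) perpb_weight xi s).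
Proof.
rewrite /FKIs (eq_bigr _ (fun sg _ => Joint_perpE sg xi)) -mulr_sumr.
by rewrite (sum_sig_of_split (fun s => ind R (perpo s xi)) (perpb_weight xi)) sum_perpo_corner_plus.
Qed.

Lemma sum_perpb_weight (xi : {ffun VtxT D -> bool}) :
  \sum_(s | corner_plus s) perpb_weight xi s =
  \sum_(s : {ffun NodeT D false -> bool} |
          [forall x, is_corner (val x) ==> s x] && [forall z, omega s z ==> xi z])
     (c - 1) ^+ (nopen xi - nomega s)%N.
Proof.
rewrite big_mkcondr; apply: eq_bigr => s s_plus.
rewrite /perpb_weight perpb_omegaE; last by move=> x y; apply: corner_plus_glue.
by rewrite /ind; case: ifP; rewrite ?mulr1 ?mulr0.
Qed.

Lemma sum_corner_plus_perpo_eq (tau : {ffun NodeT D true -> bool})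
    (xi : {ffun VtxT D -> bool}) :
  \sum_(s | corner_plus s) ind R (perpo s xi) * ind R (s == tau) =
  ind R (corner_plus tau && perpo tau xi).
Proof.
case: (boolP (corner_plus tau)) => tau_plus /=.
  rewrite (bigD1 tau) //= eqxx /ind mulr1 big1 ?addr0 // => s /andP [_ /negbTE ->].
  by rewrite mulr0.
rewrite big1 // => s s_plus; have /negbTE -> : s != tau by apply: contraNneq tau_plus => <-.
by rewrite /ind mulr0.
Qed.

Lemma sum_Joint_sig_of_eq (xi : {ffun VtxT D -> bool}) (tau : {ffun NodeT D true -> bool}) :
  \sum_sg Joint c sg xi * ind R (sig_of true sg == tau) = FKIs c xi * assignP R xi tau.
Proof.
pose K := (SpinZ D c)^-1.
rewrite (eq_bigr (fun sg => K * (ind R (perpo (sig_of true sg) xi) * ind R (sig_of true sg == tau))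
                            * perpb_weight xi (sig_of false sg))); last first.
  by move=> sg _; rewrite Joint_perpE; move: (perpb_weight _ _) => w; rewrite -!mulrA [w * _]mulrC.
rewrite (sum_sig_of_split (fun s => K * (ind R (perpo s xi) * ind R (s == tau))) (perpb_weight xi)).
rewrite -mulr_sumr sum_corner_plus_perpo_eq FKIs_factor /assignP -/K.
case: (boolP (perpo tau xi)) => [perp_o | _]; last by rewrite andbF /ind !mulr0 !mul0r.
rewrite bplus_corner_plus // andbT; case: (corner_plus tau); rewrite /ind ?(mulr0, mul0r) //.
have two_nb_neq0 : (2 : R) ^+ nbclusters xi != 0 by rewrite expf_neq0 ?pnatr_eq0.
rewrite exprVn; move: (2 ^+ _) two_nb_neq0 (\sum_(s | _) _) => N N_neq0 S.
by rewrite /=; field.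
Qed.

End Weights.

Theorem lemma7p1 (R : realFieldType) (D : seq pt) (c : R) :
  is_domain D -> 1 <= c ->
  (* (i) *)
  (exists K : R, 0 < K /\
     forall (sigma : {ffun FaceT D -> bool}) (xi : {ffun VtxT D -> bool}),
       Joint c sigma xi =
       K * ((c - 1) ^+ (nopen xi - nomega (sig_of false sigma))%N
            * ind R (perpo (sig_of true sigma) xi) * ind R (perpb (sig_of false sigma) xi)))
  /\
  (* (ii) *)
  (exists Z : R, 0 < Z /\
     forall xi : {ffun VtxT D -> bool},
       FKIs c xi =
       (2 * Z)^-1 * 2 ^+ k1 xi *
       \sum_(s : {ffun NodeT D false -> bool} |
               [forall x, is_corner (val x) ==> s x] && [forall z, omega s z ==> xi z])
          (c - 1) ^+ (nopen xi - nomega s)%N)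
  /\
  (* (iii) *)
  (forall tau : {ffun NodeT D true -> bool},
     \sum_(xi : {ffun VtxT D -> bool}) FKIs c xi * assignP R xi tau =
     \sum_(sigma : {ffun FaceT D -> bool}) SpinP c sigma * ind R (sig_of true sigma == tau)).
Proof.
(* The identities hold for any finite set of faces D. *)
move=> _ c_ge1; have SpinZ_pos := SpinZ_gt0 D c_ge1.
have SpinZ_neq0 : SpinZ D c != 0 by rewrite gt_eqF.
split; [|split].
- exists (SpinZ D c)^-1; split=> [|sg xi]; first by rewrite invr_gt0.
  rewrite Joint_perpE // /perpb_weight; congr (_ * _).
  by move: (ind R _) (ind R _) ((c - 1) ^+ _) => io ib w; ring.
- (* k(xi^1) = b + #non-boundary clusters, b recording whether D has corners. *)
  pose b := [exists x : NodeT D true, is_corner (val x)].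
  have two_b_pos : (0 : R) < 2 ^+ b by rewrite exprn_gt0.
  exists (2 ^+ b * SpinZ D c / 2); split=> [|xi]; first by rewrite !divr_gt0 ?mulr_gt0.
  rewrite FKIs_factor // sum_perpb_weight k1E exprD -/b.
  move: (2 ^+ b) (gt_eqF two_b_pos) (2 ^+ nbclusters xi) (SpinZ D c) SpinZ_neq0 (\sum_(s | _) _).
  by move=> B B_neq0 N Z Z_neq0 S; field; rewrite Z_neq0 B_neq0.
- move=> tau; symmetry.
  under eq_bigr => sg _ do rewrite -(sum_Joint c_ge1 sg) mulr_suml.
  by rewrite exchange_big; apply: eq_bigr => xi _; rewrite sum_Joint_sig_of_eq.
Qed.
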